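(* For every $v\in\mathbb C$, in the ring of formal power series in $D$, \[ \Bigl(1-\tfrac{Y_{n-2}(v+4)}{Y_{n-1}(v+5)Y_n(v+5)}D^2\Bigr)\Bigl(1-\tfrac{Y_{n-1}(v+3)}{Y_n(v+5)}D^2\Bigr)\Bigl(1-\tfrac{Y_n(v+3)}{Y_n(v+7)}D^4\Bigr)^{-1}\Bigl(1-\tfrac{Y_n(v+3)}{Y_{n-1}(v+5)}D^2\Bigr)\Bigl(1-\tfrac{Y_{n-1}(v+3)Y_n(v+3)}{Y_{n-2}(v+4)}D^2\Bigr) \] \[ =1-\sum_{j\ge0}\Bigl(k_{n-1}(v+4j+5)h_n(v+3)+(1-\delta_{j0})k_n(v+4j+5)h_{n-1}(v+3)\Bigr)D^{4j+2} \] \[ \quad+\sum_{j\ge0}\Bigl(k_{n-1}(v+4j+7)h_{n-1}(v+3)+k_n(v+4j+7)h_n(v+3)-\delta_{j0}\tfrac{Y_{n-2}(v+4)}{Y_{n-2}(v+6)}\Bigr)D^{4j+4}. \]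
   Context: Fix $n\ge4$. Let $Q_a(u)$ ($1\le a\le n$, $u\in\mathbb C$) be algebraically independent commuting indeterminates and $Y_a(u)=Q_a(u-1)/Q_a(u+1)$, $\mathcal Y=\mathbb Z[Y_a(u)^{\pm1}]$. Formal power series $\sum_{j\ge0}c_j(u)D^j$ with $c_j(u)$ in the fraction field of $\mathcal Y$ are multiplied using $D\,c(u)=c(u+1)D$ (here all coefficients depend on the parameter $v$, and $D\,c(v)=c(v+1)D$); $(1-cD^4)^{-1}=\sum_{k\ge0}(cD^4)^k$. For $a\in\{n-1,n\}$: $h_a(u)=Y_a(u)+\frac{Y_{n-2}(u+1)}{Y_a(u+2)}$ and $k_a(u)=Y_a(u)^{-1}+\frac{Y_a(u-2)}{Y_{n-2}(u-1)}$. *)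

From Stdlib Require Import Reals ZArith.
From Coquelicot Require Import Complex.
From mathcomp Require Import all_boot all_algebra.
From mathcomp Require Import mpoly.

Set Implicit Arguments.
Unset Strict Implicit.
Unset Printing Implicit Defensive.

Import GRing.Theory.
Local Open Scope ring_scope.

Definition sh (u : C) (z : Z) : C := Cplus u (RtoC (IZR z)).

Section QSystem.
Variable K : fieldType.

Definition alg_indep (n : nat) (Q : nat -> C -> K) : Prop :=
  forall (k : nat) (idx : 'I_k -> nat * C),
    injective idx ->
    (forall i, (1 <= (idx i).1 <= n)%N) ->
    forall p : {mpoly int[k]},
      (map_mpoly (fun z : int => z%:~R : K) p).@[fun i => Q (idx i).1 (idx i).2] = 0 ->
      p = 0.

Variable Q : nat -> C -> K.

Definition Y (a : nat) (u : C) : K := Q a (sh u (-1)) / Q a (sh u 1).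

(* h_a, k_a for a in {n-1, n} (n-2 is passed as m2) *)
Definition hfun (m2 a : nat) (u : C) : K := Y a u + Y m2 (sh u 1) / Y a (sh u 2).
Definition kfun (m2 a : nat) (u : C) : K := (Y a u)^-1 + Y a (sh u (-2)) / Y m2 (sh u (-1)).

(* Formal power series sum_j c_j(v) D^j, coefficients depending on v,
   with D c(v) = c(v+1) D. *)
Definition ps := nat -> C -> K.

Definition ps_one : ps := fun m _ => (m == 0)%:R.
Definition ps_mono (c : C -> K) (d : nat) : ps := fun m v => if m == d then c v else 0.
Definition ps_sub (a b : ps) : ps := fun m v => a m v - b m v.
Definition ps_mul (a b : ps) : ps :=
  fun m v => \sum_(i < m.+1) a i v * b (m - i)%N (sh v (Z.of_nat i)).
Definition ps_pow (X : ps) (k : nat) : ps := iter k (ps_mul X) ps_one.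
Definition one_minus (c : C -> K) (d : nat) : ps := ps_sub ps_one (ps_mono c d).
(* (1 - c D^d)^{-1} := sum_{k >= 0} (c D^d)^k  (for d >= 1 the k-th term
   only contributes in degrees >= k, so the coefficient of D^m is a finite sum) *)
Definition geom_inv (c : C -> K) (d : nat) : ps :=
  fun m v => \sum_(k < m.+1) ps_pow (ps_mono c d) k m v.

End QSystem.

(* The two leftmost factors multiply to 1 - alpha D^2 + beta D^4, and the geometric series
   (1 - Y_n(v+3)/Y_n(v+7) D^4)^{-1} telescopes: its D^(4j) coefficient is Y_n(v+3)/Y_n(v+4j+3).
   Multiplying out, the D^m coefficient of the left-hand side is a rational expression in the
   values Y_a(v+c) and Y_a(v+m+c) for finitely many constants c, whose shape depends only on
   m mod 4 once m >= 8.  The identity thus reduces to twelve identities of rational functions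
   (m < 8 and the four residues), valid since every Y_a(u) is nonzero: a vanishing Q_a(u) would
   contradict algebraic independence. *)

From Stdlib Require Import Reals ZArith.
From Coquelicot Require Import Complex.
From mathcomp Require Import all_boot all_algebra.
From mathcomp Require Import mpoly.
From mathcomp Require Import ring zify.
Import GRing.Theory.
Local Open Scope ring_scope.

Local Notation shn u k := (sh u (Z.of_nat k)).

Lemma sh_add (u : C) (a b : Z) : sh (sh u a) b = sh u (Z.add a b).
Proof. by rewrite /sh -Cplus_assoc -RtoC_plus -plus_IZR. Qed.

Lemma sh0 (u : C) : sh u Z0 = u.
Proof. by rewrite /sh Cplus_0_r. Qed.

Lemma shn_add (u : C) (a b : nat) : shn (shn u a) b = shn u (a + b)%N.
Proof. by rewrite sh_add -Nat2Z.inj_add. Qed.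

Ltac decide_bool b :=
  first [have -> : b = true by apply/idP; lia | have -> : b = false by apply/negbTE; lia].

Ltac decide_conditions :=
  repeat match goal with
  | |- context[if ?b then _ else _] => decide_bool b
  | |- context[nat_of_bool ?b] => decide_bool b
  end.

Section PowerSeries.
Context {K : fieldType}.
Implicit Types (a b : ps K) (c y : C -> K).

Lemma sum_ord_if_eq (m j : nat) (F : nat -> K) :
  \sum_(i < m) (if i == j :> nat then F i else 0) = if (j < m)%N then F j else 0.
Proof. by rewrite -big_mkcond big_ord1_eq. Qed.

Lemma ps_mulr1 a m v : ps_mul a (ps_one K) m v = a m v.
Proof.
rewrite /ps_mul /ps_one (bigD1 ord_max) //= subnn mulr1 big1 ?addr0 // => i.
rewrite -val_eqE /= => /negbTE im; have := ltn_ord i; rewrite ltnS => ilem.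
by rewrite (_ : (m - i == 0)%N = false) ?mulr0 //; apply/negbTE; lia.
Qed.

Lemma ps_mul_monor a c d m v :
  ps_mul a (ps_mono c d) m v =
  if (d <= m)%N then a (m - d)%N v * c (shn v (m - d)) else 0.
Proof.
rewrite /ps_mul /ps_mono.
set t := (if (d <= m)%N then _ else _).
have := sum_ord_if_eq m.+1 (m - d) (fun=> t); rewrite ltnS leq_subr => <-.
apply: eq_bigr => i _; have := ltn_ord i; rewrite ltnS => ilem.
rewrite /t; case: (ltnP m d) => [md|dm].
  by rewrite (_ : (m - i == d)%N = false) ?mulr0 ?if_same //; apply/negbTE; lia.
case: (eqVneq (i : nat) (m - d)%N) => [->|ne]; first by rewrite subKn // eqxx.
by rewrite (_ : (m - i == d)%N = false) ?mulr0 //; apply/negbTE; lia.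
Qed.

Lemma ps_mul_subr a b b' m v :
  ps_mul a (ps_sub b b') m v = ps_mul a b m v - ps_mul a b' m v.
Proof. by rewrite /ps_mul -sumrB; apply: eq_bigr => i _; rewrite mulrBr. Qed.

Lemma ps_mul_one_minus a c d m v :
  ps_mul a (one_minus c d) m v =
  a m v - (if (d <= m)%N then a (m - d)%N v * c (shn v (m - d)) else 0).
Proof. by rewrite ps_mul_subr ps_mulr1 ps_mul_monor. Qed.

Lemma ps_mul_monol c b d m v :
  ps_mul (ps_mono c d) b m v =
  if (d <= m)%N then c v * b (m - d)%N (shn v d) else 0.
Proof.
have := sum_ord_if_eq m.+1 d (fun j => c v * b (m - j)%N (shn v j)).
rewrite ltnS => <-; rewrite /ps_mul /ps_mono.
by apply: eq_bigr => i _; case: eqP => [->|]; rewrite ?mul0r.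
Qed.

Lemma ps_mul_one_minus_one_minus c c' d m v : (0 < d)%N ->
  ps_mul (one_minus c d) (one_minus c' d) m v =
  (m == 0)%:R - (if m == d then c v + c' v else 0)
  + (if m == d.*2 then c v * c' (shn v d) else 0).
Proof.
move=> d_gt0; rewrite ps_mul_one_minus /one_minus /ps_sub /ps_one /ps_mono.
have [lt_md|[k ->]] : (m < d)%N \/ exists k, m = (k + d)%N.
- by case: (ltnP m d) => [|le_dm]; [left | right; exists (m - d)%N; rewrite subnK].
- by decide_conditions; rewrite /= !subr0 addr0.
rewrite addnK; case: (eqVneq k 0) => [->|k_neq0]; first by decide_conditions; rewrite sh0 /=; ring.
case: (eqVneq k d) => [->|k_neqd]; decide_conditions; rewrite /=; ring.
Qed.

Lemma ps_mul_trinomial a b al be d m v :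
  (forall i, a i v = (i == 0)%:R - (if i == d then al else 0)
                     + (if i == d.*2 then be else 0)) ->
  ps_mul a b m v =
  b m v - (if (d <= m)%N then al * b (m - d)%N (shn v d) else 0)
  + (if (d.*2 <= m)%N then be * b (m - d.*2)%N (shn v d.*2) else 0).
Proof.
move=> aE; rewrite /ps_mul.
under eq_bigr => i _ do
  rewrite aE mulrDl mulrBl mulr_natl mulrb !(fun_if (fun x => x * _)) !mul0r.
rewrite big_split sumrB /= (sum_ord_if_eq _ _ (fun i => b (m - i)%N (shn v i))).
rewrite (sum_ord_if_eq _ _ (fun i => al * b (m - i)%N (shn v i))).
by rewrite (sum_ord_if_eq _ _ (fun i => be * b (m - i)%N (shn v i))) subn0 sh0 !ltnS.
Qed.

Section Telescoping.
Variables (y c : C -> K) (d : nat).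
Hypotheses (y_neq0 : forall u, y u != 0) (cE : forall u, c u = y u / y (shn u d)).

Lemma ps_pow_mono_telescope j m u :
  ps_pow (ps_mono c d) j m u = if m == (d * j)%N then y u / y (shn u (d * j)) else 0.
Proof.
elim: j m u => [|j IHj] m u.
  by rewrite muln0 /= /ps_one; case: (m == 0); rewrite ?sh0 ?mulfV.
rewrite /ps_pow iterS -/(ps_pow _ j) ps_mul_monol IHj shn_add cE mulnS.
case: (eqVneq m (d + d * j)%N) => [->|ne]; first by decide_conditions; rewrite mulrA divfK.
by case: leqP => // le_dm; decide_conditions; rewrite mulr0.
Qed.

Lemma geom_inv_telescope m u : (0 < d)%N ->
  geom_inv c d m u = if (d %| m)%N then y u / y (shn u m) else 0.
Proof.
move=> d_gt0; rewrite /geom_inv.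
have := sum_ord_if_eq m.+1 (m %/ d) (fun=> if (d %| m)%N then y u / y (shn u m) else 0).
rewrite ltnS leq_div => <-; apply: eq_bigr => j _.
rewrite ps_pow_mono_telescope; move: (nat_of_ord j) => {}j.
have -> : (m == d * j)%N = (d %| m)%N && (j == m %/ d)%N.
  apply/eqP/andP => [->|[/divnK mE /eqP jE]]; first by rewrite dvdn_mulr // mulKn.
  by rewrite -mE jE mulnC.
case: (eqVneq j (m %/ d)%N) => [->|_]; last by rewrite andbF.
by rewrite andbT; case: ifP => // /divnK; rewrite mulnC => ->.
Qed.

End Telescoping.

End PowerSeries.

Section QSystemNonvanishing.
Context {n : nat} {K : fieldType} {Q : nat -> C -> K}.
Hypothesis Q_indep : alg_indep n Q.

Lemma alg_indep_Q_neq0 a w : (0 < a <= n)%N -> Q a w != 0.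
Proof.
move=> a_range; apply/eqP => Q0.
have inj : injective (fun _ : 'I_1 => (a, w)) by move=> i j _; rewrite (ord1 i) (ord1 j).
have := @Q_indep 1 _ inj (fun _ => a_range) 'X_ord0.
rewrite map_mpolyX mevalXU => /(_ Q0) /(congr1 (meval (fun=> 1))).
by rewrite mevalXU meval0 => /eqP; rewrite oner_eq0.
Qed.

Lemma Y_neq0 a w : (0 < a <= n)%N -> Y Q a w != 0.
Proof. by move=> a_range; rewrite /Y mulf_neq0 ?invr_eq0 ?alg_indep_Q_neq0. Qed.

End QSystemNonvanishing.

Ltac field_using_Y_neq0 hQ := rewrite ?mulr0n ?mulr1n; field; rewrite ?(Y_neq0 hQ) //; lia.

Ltac normalize_closed_shifts v :=
  repeat match goal with
  | |- context[sh v ?z] => let c := eval vm_compute in z in progress change z with c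
  end.

(* Rewrites each point [sh v z] depending on [m] as [sh w c] with [w := shn v m] and a numeral
   [c] read off by evaluating [z] at the sample value [m0]; [m0] must satisfy the hypotheses on
   [m] in context (truncated subtractions and [m %/ 4] make [z - m] depend on them), and [lia]
   checks each rewrite. *)
Ltac normalize_shifts v m m0 :=
  let w := fresh "w" in
  pose w := shn v m;
  repeat match goal with
  | |- context[sh v ?z] =>
      lazymatch z with
      | context[m] =>
          lazymatch eval pattern m in z with
          | ?F _ =>
              let c := eval vm_compute in (Z.sub (F m0) (Z.of_nat m0)) in
              rewrite (_ : sh v z = sh w c); last by rewrite /w sh_add; f_equal; lia
          end
      end
  end;
  normalize_closed_shifts v.

Theorem mainTheorem14 (n : nat) (hn : (4 <= n)%N) (K : fieldType)
  (Q : nat -> C -> K) (hQ : alg_indep n Q) (v : C) :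
  let Y := Y Q in
  let h := hfun Q (n - 2)%N in
  let k := kfun Q (n - 2)%N in
  let s (z : nat) (u : C) := sh u (Z.of_nat z) in
  let LHS :=
    ps_mul
      (ps_mul
        (ps_mul
          (ps_mul
            (one_minus (fun u => Y (n - 2)%N (s 4%N u) / (Y (n - 1)%N (s 5%N u) * Y n (s 5%N u))) 2)
            (one_minus (fun u => Y (n - 1)%N (s 3%N u) / Y n (s 5%N u)) 2))
          (geom_inv (fun u => Y n (s 3%N u) / Y n (s 7%N u)) 4))
        (one_minus (fun u => Y n (s 3%N u) / Y (n - 1)%N (s 5%N u)) 2))
      (one_minus (fun u => Y (n - 1)%N (s 3%N u) * Y n (s 3%N u) / Y (n - 2)%N (s 4%N u)) 2) in
  let RHS (m : nat) (u : C) : K :=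
    (m == 0)%:R
    - (if (m %% 4 == 2)%N then
         let j := (m %/ 4)%N in
         k (n - 1)%N (s (4 * j + 5)%N u) * h n (s 3%N u)
         + (1 - (j == 0)%:R) * (k n (s (4 * j + 5)%N u) * h (n - 1)%N (s 3%N u))
       else 0)
    + (if (m %% 4 == 0)%N && (0 < m)%N then
         let j := (m %/ 4 - 1)%N in
         k (n - 1)%N (s (4 * j + 7)%N u) * h (n - 1)%N (s 3%N u)
         + k n (s (4 * j + 7)%N u) * h n (s 3%N u)
         - (j == 0)%:R * (Y (n - 2)%N (s 4%N u) / Y (n - 2)%N (s 6%N u))
       else 0) in
  forall m : nat, LHS m v = RHS m v.
Proof.
cbv beta zeta => m.
have geomE m' u : geom_inv (fun u => Y Q n (shn u 3) / Y Q n (shn u 7)) 4 m' u =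
    if (4 %| m')%N then Y Q n (shn u 3) / Y Q n (shn (shn u m') 3) else 0.
  apply: (geom_inv_telescope (fun u => Y Q n (shn u 3))) => // w; last by rewrite shn_add.
  by apply: (Y_neq0 hQ); lia.
rewrite !ps_mul_one_minus !(ps_mul_trinomial _ _ _ _ _ _ _ (fun i => ps_mul_one_minus_one_minus _ _ _ i v _)) //.
rewrite !geomE /kfun /hfun !shn_add !sh_add.
(* From [m = 8] on, which branch each coefficient takes depends only on [m %% 4]. *)
case: (ltnP m 8) => [m_lt8|m_ge8].
  case: m m_lt8 => [|[|[|[|[|[|[|[|m]]]]]]]] // _;
    decide_conditions; normalize_closed_shifts v; field_using_Y_neq0 hQ.
have [r r_lt4 mr] : exists2 r, (r < 4)%N & (m %% 4)%N = r by exists (m %% 4)%N; rewrite ?ltn_mod.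
case: r r_lt4 mr => [|[|[|[|r]]]] // _ mr; decide_conditions;
  [normalize_shifts v m 8%N | normalize_shifts v m 9%N
  | normalize_shifts v m 10%N | normalize_shifts v m 11%N]; field_using_Y_neq0 hQ.
Qed.
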